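(* Let $(M,g)$ be a smooth $2$-dimensional Riemannian manifold with Gaussian curvature $K$. For a point $x\in M$ and a unit vector $\xi\in S_xM$, let $\gamma=\gamma_{x,\xi}$ be the unit-speed geodesic with $\gamma(0)=x$, $\dot\gamma(0)=\xi$, and write $K_\gamma(t)=K(\gamma_{x,\xi}(t))$. Define $a=a(x,\xi,t)$ and $b=b(x,\xi,t)$ as the solutions of the scalar Jacobi equations \[ a''+K_\gamma a=0,\quad a(x,\xi,0)=1,\ a'(x,\xi,0)=0,\qquad b''+K_\gamma b=0,\quad b(x,\xi,0)=0,\ b'(x,\xi,0)=1, \] where primes denote derivatives with respect to $t$. Let $\varphi=b\,\partial_\theta a-a\,\partial_\theta b$. Then $\varphi$ satisfies the ordinary differential equation \[ \varphi^{(3)}+4K_\gamma\varphi'+2K_\gamma'\varphi=-2\,\partial_\theta K_\gamma, \] with initial conditions $\varphi(0)=\varphi'(0)=\varphi''(0)=0$.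
   Context: For a unit vector $\xi\in S_xM$, $\xi_\perp$ denotes the unit vector in $T_xM$ obtained by rotating $\xi$ by $+\pi/2$ (so $\{\xi,\xi_\perp\}$ is a positively oriented orthonormal basis). For a smooth function $u(x,\xi,t)$ (with $(x,\xi)$ in the unit sphere bundle $SM$ and $t$ in the interval of definition of $\gamma_{x,\xi}$), the derivative $\partial_\theta$ is the derivative with respect to rotation of the initial direction: $\partial_\theta u(x,\xi,t)=\frac{d}{ds}\big|_{s=0}u(x,\xi(s),t)$, where $\xi(s)$ is a smooth curve in $S_xM$ with $\xi(0)=\xi$ and $\xi'(0)=\xi_\perp$. In particular $\partial_\theta K_\gamma(t)=\frac{d}{ds}\big|_{s=0}K(\gamma_{x,\xi(s)}(t))$. The functions $a,b$ (and hence $\varphi$) are considered as functions of $(x,\xi,t)$, and derivatives $'$ are with respect to $t$. *)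

From Stdlib Require Import Reals Lra List.
From Coquelicot Require Import Coquelicot.
Open Scope R_scope.

(* Partial derivatives of a function f(s,t) of two real variables.
   s = rotation parameter of the initial direction (theta),
   t = geodesic time. *)
Definition dS (f : R -> R -> R) : R -> R -> R :=
  fun s t => Derive (fun s' => f s' t) s.
Definition dT (f : R -> R -> R) : R -> R -> R :=
  fun s t => Derive (fun t' => f s t') t.

Fixpoint pderiv (w : list bool) (f : R -> R -> R) : R -> R -> R :=
  match w with
  | nil => f
  | b :: w' => if b then dS (pderiv w' f) else dT (pderiv w' f)
  end.

Definition smooth_on (P : R -> R -> Prop) (f : R -> R -> R) : Prop :=
  forall (w : list bool) (s t : R), P s t ->
    ex_derive (fun s' => pderiv w f s' t) s /\
    ex_derive (fun t' => pderiv w f s t') t /\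
    continuous (fun p : R * R => pderiv w f (fst p) (snd p)) (s, t).

(* Differentiating the Jacobi equations in the angle shows that the variations
   [d_s a], [d_s b] solve the same equation with forcing [- d_s K a], [- d_s K b]
   and zero initial data; with the Wronskian [a b' - a' b = 1], a direct
   computation then gives the third-order equation for [phi = b d_s a - a d_s b].
   Since only the solutions themselves are given, the variations are first
   constructed by Duhamel's formula and then identified with the [s]-derivatives:
   the difference quotient error [y_h - y_0 - h z] solves a Jacobi equation with
   an [O(h^2)] forcing, so an energy (Gronwall) estimate makes it [O(h^2)]. *)

From Stdlib Require Import Reals Lra Classical ClassicalEpsilon.
From Coquelicot Require Import Coquelicot.
Open Scope R_scope.

Lemma is_derive_eq (f : R -> R) (x l1 l2 : R) :
  is_derive f x l1 -> l1 = l2 -> is_derive f x l2.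
Proof. now intros H <-. Qed.

Lemma is_derive_Rconst (a x : R) : is_derive (fun _ => a) x 0.
Proof. exact (is_derive_const a x). Qed.

Lemma is_derive_Rplus (f g : R -> R) (x df dg : R) :
  is_derive f x df -> is_derive g x dg -> is_derive (fun u => f u + g u) x (df + dg).
Proof. exact (is_derive_plus f g x df dg). Qed.

Lemma is_derive_Rminus (f g : R -> R) (x df dg : R) :
  is_derive f x df -> is_derive g x dg -> is_derive (fun u => f u - g u) x (df - dg).
Proof. exact (is_derive_minus f g x df dg). Qed.

Lemma is_derive_Rmult (f g : R -> R) (x df dg : R) :
  is_derive f x df -> is_derive g x dg ->
  is_derive (fun u => f u * g u) x (df * g x + f x * dg).
Proof. intros Hf Hg. exact (is_derive_mult f g x df dg Hf Hg Rmult_comm). Qed.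

Lemma locally_open_interval (l r t : R) :
  l < t < r -> locally t (fun u => l < u < r).
Proof.
  intros Ht.
  assert (Hpos : 0 < Rmin (t - l) (r - t)) by (apply Rmin_pos; lra).
  exists (mkposreal _ Hpos); intros u Hu.
  change (Rabs (u - t) < Rmin (t - l) (r - t)) in Hu.
  apply Rabs_lt_between' in Hu.
  pose proof (Rmin_l (t - l) (r - t)); pose proof (Rmin_r (t - l) (r - t)); lra.
Qed.

Lemma segment_sub_interval (l r t x : R) :
  l < 0 < r -> l < t < r -> Rmin 0 t <= x <= Rmax 0 t -> l < x < r.
Proof. unfold Rmin, Rmax; destruct Rle_dec; lra. Qed.

Lemma segment_sub_segment (h s x : R) :
  Rmin 0 h <= s <= Rmax 0 h -> Rmin 0 s <= x <= Rmax 0 s ->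
  Rmin 0 h <= x <= Rmax 0 h.
Proof. unfold Rmin, Rmax; destruct (Rle_dec 0 h), (Rle_dec 0 s); lra. Qed.

Lemma Rabs_le_segment (h x : R) : Rmin 0 h <= x <= Rmax 0 h -> Rabs x <= Rabs h.
Proof.
  unfold Rmin, Rmax; destruct (Rle_dec 0 h);
  unfold Rabs; destruct (Rcase_abs x), (Rcase_abs h); lra.
Qed.

Lemma segment_0 (t : R) : Rmin 0 t <= 0 <= Rmax 0 t.
Proof. unfold Rmin, Rmax; destruct Rle_dec; lra. Qed.

Lemma MVT_segment (f df : R -> R) (a b : R) :
  (forall x, Rmin a b <= x <= Rmax a b -> is_derive f x (df x)) ->
  exists c, Rmin a b <= c <= Rmax a b /\ f b - f a = df c * (b - a).
Proof.
  intros Hd; apply MVT_gen.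
  - intros x Hx; apply Hd; lra.
  - intros x Hx; apply continuity_pt_filterlim.
    apply (ex_derive_continuous f); exists (df x); now apply Hd.
Qed.

Lemma mean_value_bound (f df : R -> R) (a b M : R) :
  (forall x, Rmin a b <= x <= Rmax a b -> is_derive f x (df x) /\ Rabs (df x) <= M) ->
  Rabs (f b - f a) <= M * Rabs (b - a).
Proof.
  intros H; destruct (MVT_segment f df a b) as [c [Hc ->]]; [now apply H|].
  rewrite Rabs_mult; apply Rmult_le_compat_r; [apply Rabs_pos | now apply H].
Qed.

Lemma taylor1_remainder_bound (f df ddf : R -> R) (h B : R) :
  (forall s, Rmin 0 h <= s <= Rmax 0 h ->
     is_derive f s (df s) /\ is_derive df s (ddf s) /\ Rabs (ddf s) <= B) ->
  Rabs (f h - f 0 - h * df 0) <= B * (h * h).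
Proof.
  intros H.
  assert (HB : 0 <= B)
    by (destruct (H 0 (segment_0 h)) as [_ [_ HB]]; pose proof (Rabs_pos (ddf 0)); lra).
  assert (Hdf : forall s, Rmin 0 h <= s <= Rmax 0 h -> Rabs (df s - df 0) <= B * Rabs h).
  { intros s Hs; eapply Rle_trans.
    - apply (mean_value_bound df ddf 0 s B); intros x Hx.
      split; apply H; now apply (segment_sub_segment h s).
    - rewrite Rminus_0_r; apply Rmult_le_compat_l; [exact HB | now apply Rabs_le_segment]. }
  replace (f h - f 0 - h * df 0) with ((f h - h * df 0) - (f 0 - 0 * df 0)) by ring.
  replace (B * (h * h)) with (B * Rabs h * Rabs (h - 0))
    by (rewrite Rminus_0_r, Rmult_assoc, <- Rabs_mult; f_equal; apply Rabs_pos_eq, Rle_0_sqr).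
  apply (mean_value_bound (fun s => f s - s * df 0) (fun s => df s - df 0)).
  intros s Hs; split; [|now apply Hdf].
  apply (is_derive_eq _ _ (df s - (1 * df 0 + s * 0))); [|ring].
  apply is_derive_Rminus; [now apply H|].
  apply (is_derive_Rmult (fun s => s) (fun _ => df 0)); [apply (is_derive_id s) | apply is_derive_Rconst].
Qed.

Lemma gronwall_exp_bound (f df : R -> R) (c t : R) :
  (forall u, Rmin 0 t <= u <= Rmax 0 t ->
     is_derive f u (df u) /\ Rabs (df u) <= c * f u) ->
  f t <= f 0 * exp (c * Rabs t).
Proof.
  intros H.
  set (e := if Rle_dec 0 t then 1 else -1).
  assert (Het : e * t = Rabs t)
    by (unfold e; destruct Rle_dec; [rewrite Rabs_pos_eq | rewrite Rabs_left]; lra).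
  (* [f u * exp (- c |u|)] is nonincreasing in [|u|] along the segment *)
  destruct (MVT_segment (fun u => f u * exp (- (c * e) * u))
              (fun u => df u * exp (- (c * e) * u) + f u * (- (c * e) * exp (- (c * e) * u))) 0 t)
    as [x [Hx Hmvt]].
  { intros u Hu; apply (is_derive_Rmult f (fun u => exp (- (c * e) * u))); [now apply H|].
    apply (is_derive_eq _ _ (- (c * e) * 1 * exp (- (c * e) * u))); [|ring].
    apply (is_derive_comp exp (fun u => - (c * e) * u) u (exp (- (c * e) * u)));
      [apply is_derive_exp|].
    apply is_derive_scal, (is_derive_id u). }
  assert (Hdec : (df x - c * f x * e) * t <= 0).
  { destruct (H x Hx) as [_ Hb].
    pose proof (Rle_abs (df x * t)); rewrite Rabs_mult in *.
    assert (Rabs (df x) * Rabs t <= c * f x * Rabs t)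
      by (apply Rmult_le_compat_r; [apply Rabs_pos | exact Hb]).
    rewrite <- Het in *; nra. }
  assert (Hx0 : 0 < exp (- (c * e) * x)) by apply exp_pos.
  assert (Hle : f t * exp (- (c * Rabs t)) <= f 0).
  { rewrite <- Het.
    replace (- (c * (e * t))) with (- (c * e) * t) by ring.
    replace (- (c * e) * 0) with 0 in Hmvt by ring; rewrite exp_0 in Hmvt.
    assert ((df x * exp (- (c * e) * x) + f x * (- (c * e) * exp (- (c * e) * x))) * (t - 0)
            = exp (- (c * e) * x) * ((df x - c * f x * e) * t)) by ring.
    nra. }
  replace (f t) with (f t * exp (- (c * Rabs t)) * exp (c * Rabs t))
    by (rewrite Rmult_assoc, <- exp_plus; replace (- (c * Rabs t) + c * Rabs t) with 0 by ring;
        rewrite exp_0; ring).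
  apply Rmult_le_compat_r; [left; apply exp_pos | exact Hle].
Qed.

Lemma energy_derivative_bound (Y Y1 Q G0 M G : R) :
  Rabs Q <= M -> Rabs G0 <= G ->
  Rabs (2 * Y * Y1 + 2 * Y1 * (- Q * Y + G0)) <= (M + 2) * (Y * Y + Y1 * Y1) + G * G.
Proof.
  intros HQ HG; apply Rabs_le_between in HQ, HG.
  assert (0 <= (M + Q) * ((Y + Y1) * (Y + Y1))) by (apply Rmult_le_pos; [lra | apply Rle_0_sqr]).
  assert (0 <= (M - Q) * ((Y - Y1) * (Y - Y1))) by (apply Rmult_le_pos; [lra | apply Rle_0_sqr]).
  assert (0 <= (M + Q) * ((Y - Y1) * (Y - Y1))) by (apply Rmult_le_pos; [lra | apply Rle_0_sqr]).
  assert (0 <= (M - Q) * ((Y + Y1) * (Y + Y1))) by (apply Rmult_le_pos; [lra | apply Rle_0_sqr]).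
  assert (0 <= (Y - Y1) * (Y - Y1)) by apply Rle_0_sqr.
  assert (0 <= (Y + Y1) * (Y + Y1)) by apply Rle_0_sqr.
  assert (0 <= (Y1 - G0) * (Y1 - G0)) by apply Rle_0_sqr.
  assert (0 <= (Y1 + G0) * (Y1 + G0)) by apply Rle_0_sqr.
  assert (G0 * G0 <= G * G) by nra.
  apply Rabs_le; split; nra.
Qed.

Lemma linear_ode_energy_bound (y y1 q g : R -> R) (t M G : R) :
  (forall u, Rmin 0 t <= u <= Rmax 0 t ->
     is_derive y u (y1 u) /\ is_derive y1 u (- q u * y u + g u) /\
     Rabs (q u) <= M /\ Rabs (g u) <= G) ->
  y 0 = 0 -> y1 0 = 0 ->
  Rabs (y t) <= G * exp ((M + 2) * Rabs t).
Proof.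
  intros H Hy0 Hy10.
  destruct (H 0 (segment_0 t)) as [_ [_ [HM HG]]].
  pose proof (Rabs_pos (q 0)); pose proof (Rabs_pos (g 0)).
  set (c := M + 2); set (E := fun u => y u * y u + y1 u * y1 u).
  (* Gronwall for [c E + G^2], whose derivative is bounded by [c (c E + G^2)] *)
  assert (Hgr : c * E t + G * G <= (c * E 0 + G * G) * exp (c * Rabs t)).
  { apply (gronwall_exp_bound (fun u => c * E u + G * G)
             (fun u => c * (2 * y u * y1 u + 2 * y1 u * (- q u * y u + g u)) + 0)).
    intros u Hu; destruct (H u Hu) as [Dy [Dy1 [Hq Hg]]]; split.
    - apply is_derive_Rplus; [apply is_derive_scal | apply is_derive_Rconst].
      apply (is_derive_eq _ _ ((y1 u * y u + y u * y1 u)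
                              + ((- q u * y u + g u) * y1 u + y1 u * (- q u * y u + g u))));
        [|ring].
      apply is_derive_Rplus; apply is_derive_Rmult; assumption.
    - rewrite Rplus_0_r, Rabs_mult, (Rabs_pos_eq c) by (unfold c; lra).
      apply Rmult_le_compat_l; [unfold c; lra | now apply energy_derivative_bound]. }
  assert (HE0 : E 0 = 0) by (unfold E; rewrite Hy0, Hy10; ring).
  rewrite HE0, Rmult_0_r, Rplus_0_l in Hgr.
  set (X := exp (c * Rabs t)) in *.
  assert (HX : 1 <= X).
  { assert (0 <= c * Rabs t) by (apply Rmult_le_pos; [unfold c; lra | apply Rabs_pos]).
    pose proof (exp_ineq1_le (c * Rabs t)); unfold X; lra. }
  assert (Hy2 : y t * y t <= (G * X) * (G * X)).
  { assert (0 <= y1 t * y1 t) by apply Rle_0_sqr.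
    assert (G * G * X <= G * G * (X * X)) by nra.
    unfold E, c in *; nra. }
  rewrite <- (Rabs_pos_eq (G * X)) by nra.
  now apply Rsqr_le_abs_0.
Qed.

Lemma continuous_bounded_on_segment (f : R -> R) (p q : R) :
  p <= q -> (forall x, p <= x <= q -> continuous f x) ->
  exists A, 0 <= A /\ forall x, p <= x <= q -> Rabs (f x) <= A.
Proof.
  intros Hpq Hc; destruct (bounded_continuity f p q Hc) as [A HA].
  exists A; split.
  - specialize (HA p (conj (Rle_refl p) Hpq)); pose proof (Rabs_pos (f p)).
    change (Rabs (f p) < A) in HA; lra.
  - intros x Hx; apply Rlt_le, (HA x Hx).
Qed.

Lemma continuity_2d_bounded_near_segment (f : R -> R -> R) (p q : R) :
  p <= q -> (forall x, p <= x <= q -> continuity_2d_pt f 0 x) ->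
  exists d B, 0 < d /\ forall s x, Rabs s < d -> p <= x <= q -> Rabs (f s x) <= B.
Proof.
  intros Hpq Hc.
  destruct (continuous_bounded_on_segment (f 0) p q Hpq) as [M0 [_ HM0]].
  { intros x Hx; apply continuity_pt_filterlim, continuity_pt_locally; intros eps.
    apply (locally_2d_1d_const_x (fun u v => Rabs (f u v - f 0 x) < eps) 0 x).
    now apply Hc. }
  assert (Hrho : forall x, exists rho : posreal, p <= x <= q -> forall u v,
             Rabs (u - 0) < rho -> Rabs (v - x) < rho -> Rabs (f u v - f 0 x) < 1).
  { intros x; destruct (classic (p <= x <= q)) as [Hx | Hx].
    - destruct (Hc x Hx (mkposreal 1 Rlt_0_1)) as [rho Hr]; now exists rho.
    - exists (mkposreal 1 Rlt_0_1); intros; contradiction. }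
  set (rho := fun x => proj1_sig (constructive_indefinite_description _ (Hrho x))).
  destruct (compactness_value_1d p q rho) as [d Hd].
  exists d, (M0 + 1); split; [apply cond_pos|]; intros s x Hs Hx.
  specialize (Hd x Hx); apply NNPP in Hd; destruct Hd as [t0 [Ht0 [Hxt Hdt]]].
  pose proof (proj2_sig (constructive_indefinite_description _ (Hrho t0))) as Hr.
  assert (Rabs (f s x - f 0 t0) < 1)
    by (apply Hr; [exact Ht0 | rewrite Rminus_0_r; unfold rho in Hdt; lra | exact Hxt]).
  pose proof (HM0 t0 Ht0).
  replace (f s x) with ((f s x - f 0 t0) + f 0 t0) by ring.
  pose proof (Rabs_triang (f s x - f 0 t0) (f 0 t0)); lra.
Qed.

Lemma is_derive_of_quadratic_remainder (F : R -> R) (L d C : R) :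
  0 < d -> (forall h, Rabs h < d -> Rabs (F h - F 0 - h * L) <= C * (h * h)) ->
  is_derive F 0 L.
Proof.
  intros Hd H; apply is_derive_Reals; intros eps Heps.
  set (C' := Rabs C + 1).
  assert (HC' : 0 < C') by (pose proof (Rabs_pos C); unfold C'; lra).
  assert (Hm : 0 < Rmin d (eps / C')) by (apply Rmin_pos; [lra | apply Rdiv_lt_0_compat; lra]).
  exists (mkposreal _ Hm); intros h Hh0 Hh; simpl in Hh.
  pose proof (Rmin_l d (eps / C')); pose proof (Rmin_r d (eps / C')).
  assert (Hab : 0 < Rabs h) by now apply Rabs_pos_lt.
  assert (Hhh : h * h = Rabs h * Rabs h) by (rewrite <- Rabs_mult; symmetry; apply Rabs_pos_eq, Rle_0_sqr).
  assert (HC : C * (h * h) <= C' * Rabs h * Rabs h)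
    by (rewrite Hhh; pose proof (Rle_abs C); unfold C'; nra).
  specialize (H h ltac:(lra)).
  rewrite Rplus_0_l.
  replace ((F h - F 0) / h - L) with ((F h - F 0 - h * L) / h) by (field; exact Hh0).
  unfold Rdiv; rewrite Rabs_mult, Rabs_inv.
  apply Rmult_lt_reg_r with (Rabs h); [exact Hab|].
  rewrite Rmult_assoc, Rinv_l, Rmult_1_r by lra.
  assert (C' * Rabs h < eps)
    by (apply (Rmult_lt_reg_r (/ C')); [now apply Rinv_0_lt_compat|];
        replace (C' * Rabs h * / C') with (Rabs h) by (field; lra); unfold Rdiv in *; lra).
  nra.
Qed.

Section SmoothOn.

Variables (P : R -> R -> Prop) (k : R -> R -> R).
Hypothesis Hk : smooth_on P k.

Lemma smooth_on_is_derive_s (w : list bool) (s t : R) :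
  P s t -> is_derive (fun s' => pderiv w k s' t) s (dS (pderiv w k) s t).
Proof. intros Hp; apply Derive_correct, (Hk w s t Hp). Qed.

Lemma smooth_on_is_derive_t (w : list bool) (s t : R) :
  P s t -> is_derive (fun t' => pderiv w k s t') t (dT (pderiv w k) s t).
Proof. intros Hp; apply Derive_correct, (Hk w s t Hp). Qed.

Lemma smooth_on_continuity_2d (w : list bool) (s t : R) :
  P s t -> continuity_2d_pt (pderiv w k) s t.
Proof. intros Hp; apply continuity_2d_pt_filterlim, (Hk w s t Hp). Qed.

Lemma smooth_on_continuous_t (w : list bool) (s t : R) :
  P s t -> continuous (fun t' => pderiv w k s t') t.
Proof.
  intros Hp; apply continuity_pt_filterlim, continuity_pt_locally; intros eps.
  apply (locally_2d_1d_const_x (fun s' t' => Rabs (pderiv w k s' t' - pderiv w k s t) < eps)).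
  exact (smooth_on_continuity_2d w s t Hp eps).
Qed.

End SmoothOn.

Lemma forcing_bound (D1 D2 h z w B1 B2 A Y : R) :
  Rabs D1 <= B1 * Rabs h -> Rabs D2 <= B2 * (h * h) -> Rabs z <= A -> Rabs w <= Y ->
  Rabs (- D1 * h * z - D2 * w) <= (B1 * A + B2 * Y) * (h * h).
Proof.
  intros H1 H2 Hz Hw.
  assert (Hhh : h * h = Rabs h * Rabs h)
    by (rewrite <- Rabs_mult; symmetry; apply Rabs_pos_eq, Rle_0_sqr).
  assert (HD1 : Rabs D1 * Rabs h * Rabs z <= B1 * Rabs h * Rabs h * A).
  { apply Rmult_le_compat; [| apply Rabs_pos | | exact Hz].
    - apply Rmult_le_pos; apply Rabs_pos.
    - apply Rmult_le_compat_r; [apply Rabs_pos | exact H1]. }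
  assert (HD2 : Rabs D2 * Rabs w <= B2 * (h * h) * Y)
    by (apply Rmult_le_compat; [apply Rabs_pos | apply Rabs_pos | exact H2 | exact Hw]).
  eapply Rle_trans; [apply Rabs_triang|].
  rewrite Rabs_Ropp, Rabs_mult, Rabs_mult, Rabs_Ropp, Rabs_mult.
  rewrite Hhh in HD2 |- *; lra.
Qed.

Section JacobiVariation.

Variables (delta l r t c0 c1 : R) (k y y1 : R -> R -> R) (al al1 : R -> R).
Hypotheses (Hdelta : 0 < delta) (Hlr : l < 0 < r) (Ht : l < t < r).
Hypothesis Hk : smooth_on (fun s u => -delta < s < delta /\ l < u < r) k.
Hypothesis Hy : forall s, -delta < s < delta -> forall u, l < u < r ->
  is_derive (y s) u (y1 s u) /\ is_derive (y1 s) u (- k s u * y s u).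
Hypothesis Hy0 : forall s, -delta < s < delta -> y s 0 = c0 /\ y1 s 0 = c1.
Hypothesis Hal : forall u, l < u < r ->
  is_derive al u (al1 u) /\ is_derive al1 u (- k 0 u * al u - dS k 0 u * y 0 u).
Hypotheses (Hal0 : al 0 = 0) (Hal10 : al1 0 = 0).

Lemma segment_in_domain (s u : R) :
  Rabs s < delta -> Rmin 0 t <= u <= Rmax 0 t -> -delta < s < delta /\ l < u < r.
Proof.
  intros Hs Hu; split; [apply Rabs_def2 in Hs; lra | exact (segment_sub_interval l r t u Hlr Ht Hu)].
Qed.

Section ParameterBounds.

Variables (d B0 B1 B2 A Y : R).
Hypothesis Hd : d <= delta.
Hypothesis HB0 : forall s u, Rabs s < d -> Rmin 0 t <= u <= Rmax 0 t -> Rabs (k s u) <= B0.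
Hypothesis HB1 : forall s u, Rabs s < d -> Rmin 0 t <= u <= Rmax 0 t -> Rabs (dS k s u) <= B1.
Hypothesis HB2 :
  forall s u, Rabs s < d -> Rmin 0 t <= u <= Rmax 0 t -> Rabs (dS (dS k) s u) <= B2.
Hypothesis HA : forall u, Rmin 0 t <= u <= Rmax 0 t -> Rabs (al u) <= A.
Hypothesis HY : forall u, Rmin 0 t <= u <= Rmax 0 t -> Rabs (y 0 u) <= Y.

Lemma k_increment_bound (h u : R) :
  Rabs h < d -> Rmin 0 t <= u <= Rmax 0 t -> Rabs (k h u - k 0 u) <= B1 * Rabs h.
Proof.
  intros Hh Hu; rewrite <- (Rminus_0_r h) at 2.
  apply (mean_value_bound (fun s => k s u) (fun s => dS k s u)); intros s Hs.
  pose proof (Rabs_le_segment h s Hs); split.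
  - apply (smooth_on_is_derive_s _ k Hk nil), segment_in_domain; [lra | exact Hu].
  - apply HB1; [lra | exact Hu].
Qed.

Lemma k_taylor_bound (h u : R) :
  Rabs h < d -> Rmin 0 t <= u <= Rmax 0 t ->
  Rabs (k h u - k 0 u - h * dS k 0 u) <= B2 * (h * h).
Proof.
  intros Hh Hu.
  apply (taylor1_remainder_bound (fun s => k s u) (fun s => dS k s u) (fun s => dS (dS k) s u)).
  intros s Hs; pose proof (Rabs_le_segment h s Hs).
  assert (Hdom : -delta < s < delta /\ l < u < r) by (apply segment_in_domain; [lra | exact Hu]).
  split; [|split].
  - exact (smooth_on_is_derive_s _ k Hk nil s u Hdom).
  - exact (smooth_on_is_derive_s _ k Hk (true :: nil) s u Hdom).
  - apply HB2; [lra | exact Hu].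
Qed.

Lemma jacobi_variation_error_bound (h : R) :
  Rabs h < d ->
  Rabs (y h t - y 0 t - h * al t) <= (B1 * A + B2 * Y) * (h * h) * exp ((B0 + 2) * Rabs t).
Proof.
  intros Hh.
  assert (Hhd : -delta < h < delta) by (pose proof (Rabs_def2 h delta ltac:(lra)); lra).
  apply (linear_ode_energy_bound (fun u => y h u - y 0 u - h * al u)
           (fun u => y1 h u - y1 0 u - h * al1 u) (k h)
           (fun u => - (k h u - k 0 u) * h * al u - (k h u - k 0 u - h * dS k 0 u) * y 0 u)).
  - intros u Hu; pose proof (segment_sub_interval l r t u Hlr Ht Hu) as Hu'.
    destruct (Hy h Hhd u Hu') as [Dh Dh1]; destruct (Hy 0 ltac:(lra) u Hu') as [D0 D01].
    destruct (Hal u Hu') as [Da Da1].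
    split; [|split; [|split]].
    + apply is_derive_Rminus; [now apply is_derive_Rminus | now apply is_derive_scal].
    + apply (is_derive_eq _ _ ((- k h u * y h u - - k 0 u * y 0 u)
                              - h * (- k 0 u * al u - dS k 0 u * y 0 u))); [|ring].
      apply is_derive_Rminus; [now apply is_derive_Rminus | now apply is_derive_scal].
    + now apply HB0.
    + apply forcing_bound; [now apply k_increment_bound | now apply k_taylor_bound | now apply HA | now apply HY].
  - destruct (Hy0 h Hhd) as [-> _]; destruct (Hy0 0 ltac:(lra)) as [-> _]; rewrite Hal0; ring.
  - destruct (Hy0 h Hhd) as [_ ->]; destruct (Hy0 0 ltac:(lra)) as [_ ->]; rewrite Hal10; ring.
Qed.

End ParameterBounds.

Lemma jacobi_variation_remainder :
  exists d C, 0 < d /\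
    forall h, Rabs h < d -> Rabs (y h t - y 0 t - h * al t) <= C * (h * h).
Proof.
  set (p := Rmin 0 t); set (q := Rmax 0 t).
  assert (Hpq : p <= q) by (pose proof (segment_0 t); unfold p, q in *; lra).
  assert (Hin : forall x, p <= x <= q -> l < x < r) by exact (fun x => segment_sub_interval l r t x Hlr Ht).
  assert (Hdom : forall w x, p <= x <= q -> continuity_2d_pt (pderiv w k) 0 x)
    by (intros w x Hx; apply (smooth_on_continuity_2d _ k Hk), segment_in_domain;
        [rewrite Rabs_R0; lra | exact Hx]).
  destruct (continuity_2d_bounded_near_segment (pderiv nil k) p q Hpq (Hdom nil))
    as [d0 [B0 [Hd0 HB0]]].
  destruct (continuity_2d_bounded_near_segment (pderiv (true :: nil) k) p q Hpq (Hdom _))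
    as [d1 [B1 [Hd1 HB1]]].
  destruct (continuity_2d_bounded_near_segment (pderiv (true :: true :: nil) k) p q Hpq (Hdom _))
    as [d2 [B2 [Hd2 HB2]]].
  destruct (continuous_bounded_on_segment al p q Hpq) as [A [_ HA]].
  { intros x Hx; apply (ex_derive_continuous al); exists (al1 x); now apply Hal, Hin. }
  destruct (continuous_bounded_on_segment (y 0) p q Hpq) as [Y [_ HY]].
  { intros x Hx; apply (ex_derive_continuous (y 0)); exists (y1 0 x).
    apply (Hy 0); [lra | now apply Hin]. }
  set (d := Rmin (Rmin d0 d1) (Rmin d2 delta)).
  assert (Hd : d <= d0 /\ d <= d1 /\ d <= d2 /\ d <= delta).
  { pose proof (Rmin_l (Rmin d0 d1) (Rmin d2 delta)); pose proof (Rmin_r (Rmin d0 d1) (Rmin d2 delta)).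
    pose proof (Rmin_l d0 d1); pose proof (Rmin_r d0 d1).
    pose proof (Rmin_l d2 delta); pose proof (Rmin_r d2 delta); unfold d; lra. }
  exists d, ((B1 * A + B2 * Y) * exp ((B0 + 2) * Rabs t)); split; [unfold d; repeat apply Rmin_pos; lra|].
  intros h Hh.
  replace ((B1 * A + B2 * Y) * exp ((B0 + 2) * Rabs t) * (h * h))
    with ((B1 * A + B2 * Y) * (h * h) * exp ((B0 + 2) * Rabs t)) by ring.
  apply (jacobi_variation_error_bound d); try easy; intros s u Hs Hu;
    [apply HB0 | apply HB1 | apply HB2]; (lra || exact Hu).
Qed.

Lemma jacobi_variation_is_derive : is_derive (fun s => y s t) 0 (al t).
Proof.
  destruct jacobi_variation_remainder as [d [C [Hd H]]].
  exact (is_derive_of_quadratic_remainder _ _ d C Hd H).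
Qed.

End JacobiVariation.

Lemma is_derive_RInt_0 (F : R -> R) (l r u : R) :
  l < 0 < r -> l < u < r -> (forall x, l < x < r -> continuous F x) ->
  is_derive (fun v => RInt F 0 v) u (F u).
Proof.
  intros Hlr Hu HF; apply (is_derive_RInt F _ 0 u); [|now apply HF].
  apply (filter_imp (fun v => l < v < r)); [|now apply locally_open_interval].
  intros v Hv; apply (RInt_correct F 0 v), ex_RInt_continuous.
  intros x Hx; apply HF, (segment_sub_interval l r v x Hlr Hv Hx).
Qed.

Section Jacobi.

Variables (l r : R) (K a a1 b b1 : R -> R).
Hypothesis Hlr : l < 0 < r.
Hypothesis Hab : forall u, l < u < r ->
  is_derive a u (a1 u) /\ is_derive a1 u (- K u * a u) /\
  is_derive b u (b1 u) /\ is_derive b1 u (- K u * b u).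
Hypotheses (Ha0 : a 0 = 1) (Ha10 : a1 0 = 0) (Hb0 : b 0 = 0) (Hb10 : b1 0 = 1).

Lemma jacobi_wronskian (u : R) : l < u < r -> a u * b1 u - a1 u * b u = 1.
Proof.
  intros Hu.
  destruct (MVT_segment (fun v => a v * b1 v - a1 v * b v) (fun _ => 0) 0 u) as [c [_ Hc]].
  - intros x Hx; destruct (Hab x (segment_sub_interval l r u x Hlr Hu Hx)) as [Da [Da1 [Db Db1]]].
    apply (is_derive_eq _ _ ((a1 x * b1 x + a x * (- K x * b x))
                            - ((- K x * a x) * b x + a1 x * b1 x))); [|ring].
    apply is_derive_Rminus; apply is_derive_Rmult; assumption.
  - rewrite Ha0, Ha10, Hb0, Hb10 in Hc; lra.
Qed.

(* Duhamel's formula, the Wronskian being 1 *)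
Lemma jacobi_forced_solution (g : R -> R) :
  (forall u, l < u < r -> continuous g u) ->
  exists z z1 : R -> R,
    (forall u, l < u < r -> is_derive z u (z1 u) /\ is_derive z1 u (- K u * z u - g u)) /\
    z 0 = 0 /\ z1 0 = 0.
Proof.
  intros Hg.
  set (P := fun u => RInt (fun v => g v * a v) 0 u).
  set (Q := fun u => RInt (fun v => g v * b v) 0 u).
  assert (HPQ : forall u, l < u < r -> is_derive P u (g u * a u) /\ is_derive Q u (g u * b u)).
  { intros u Hu; split;
      [apply (is_derive_RInt_0 (fun v => g v * a v) l r) | apply (is_derive_RInt_0 (fun v => g v * b v) l r)];
      try assumption; intros x Hx; destruct (Hab x Hx) as [Da [_ [Db _]]];
      apply (continuous_mult g); [now apply Hg | | now apply Hg |];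
      apply (ex_derive_continuous (V := R_NormedModule)); eexists; eassumption. }
  exists (fun u => a u * Q u - b u * P u), (fun u => a1 u * Q u - b1 u * P u); split.
  - intros u Hu; destruct (Hab u Hu) as [Da [Da1 [Db Db1]]]; destruct (HPQ u Hu) as [DP DQ].
    pose proof (jacobi_wronskian u Hu) as W; split.
    + apply (is_derive_eq _ _ ((a1 u * Q u + a u * (g u * b u))
                              - (b1 u * P u + b u * (g u * a u)))); [|ring].
      apply is_derive_Rminus; apply is_derive_Rmult; assumption.
    + apply (is_derive_eq _ _ ((- K u * a u * Q u + a1 u * (g u * b u))
                              - (- K u * b u * P u + b1 u * (g u * a u)))).
      * apply is_derive_Rminus; apply is_derive_Rmult; assumption.
      * transitivity (- K u * (a u * Q u - b u * P u) - g u * (a u * b1 u - a1 u * b u));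
          [ring | rewrite W; ring].
  - unfold P, Q; rewrite !RInt_point; split; unfold zero; simpl; ring.
Qed.

(* With [y = d_s a], [z = d_s b], this is the equation for [phi = b d_s a - a d_s b]. *)
Lemma variation_combination_ode (F dK y y1 z z1 : R -> R) :
  (forall u, l < u < r -> is_derive K u (dK u)) ->
  (forall u, l < u < r ->
     is_derive y u (y1 u) /\ is_derive y1 u (- K u * y u - F u * a u) /\
     is_derive z u (z1 u) /\ is_derive z1 u (- K u * z u - F u * b u)) ->
  y 0 = 0 -> y1 0 = 0 -> z 0 = 0 -> z1 0 = 0 ->
  let psi := fun u => b u * y u - a u * z u in
  exists psi1 psi2 psi3 : R -> R,
    (forall u, l < u < r ->
       is_derive psi u (psi1 u) /\ is_derive psi1 u (psi2 u) /\ is_derive psi2 u (psi3 u) /\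
       psi3 u + 4 * K u * psi1 u + 2 * dK u * psi u = - 2 * F u) /\
    psi 0 = 0 /\ psi1 0 = 0 /\ psi2 0 = 0.
Proof.
  intros HK Hyz Hy0 Hy10 Hz0 Hz10 psi.
  set (psi1 := fun u => b1 u * y u + b u * y1 u - (a1 u * z u + a u * z1 u)).
  set (psi2 := fun u => 2 * (b1 u * y1 u - a1 u * z1 u) - 2 * (K u * psi u)).
  assert (Hpsi : forall u, l < u < r -> is_derive psi u (psi1 u)).
  { intros u Hu; destruct (Hab u Hu) as [Da [_ [Db _]]]; destruct (Hyz u Hu) as [Dy [_ [Dz _]]].
    apply is_derive_Rminus; apply is_derive_Rmult; assumption. }
  exists psi1, psi2, (fun u => - 2 * dK u * psi u - 4 * K u * psi1 u - 2 * F u).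
  split; [|unfold psi2, psi1, psi; rewrite Hy0, Hy10, Hz0, Hz10; split; [|split]; ring].
  intros u Hu; destruct (Hab u Hu) as [Da [Da1 [Db Db1]]].
  destruct (Hyz u Hu) as [Dy [Dy1 [Dz Dz1]]]; pose proof (jacobi_wronskian u Hu) as W.
  split; [now apply Hpsi | split; [|split; [|ring]]].
  - apply (is_derive_eq _ _ ((- K u * b u * y u + b1 u * y1 u + (b1 u * y1 u + b u * (- K u * y u - F u * a u)))
        - (- K u * a u * z u + a1 u * z1 u + (a1 u * z1 u + a u * (- K u * z u - F u * b u))))).
    + apply is_derive_Rminus; apply is_derive_Rplus; apply is_derive_Rmult; assumption.
    + unfold psi2, psi; ring.
  - apply (is_derive_eq _ _ (2 * ((- K u * b u * y1 u + b1 u * (- K u * y u - F u * a u))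
                                 - (- K u * a u * z1 u + a1 u * (- K u * z u - F u * b u)))
                            - 2 * (dK u * psi u + K u * psi1 u))).
    + apply is_derive_Rminus; apply is_derive_scal;
        [apply is_derive_Rminus | apply is_derive_Rmult; [now apply HK | now apply Hpsi]];
        apply is_derive_Rmult; assumption.
    + transitivity (- 2 * dK u * psi u - 4 * K u * psi1 u - 2 * F u * (a u * b1 u - a1 u * b u));
        [unfold psi1, psi; ring | rewrite W; ring].
Qed.

End Jacobi.

Lemma is_derive_ext_interval (f g : R -> R) (l r t d : R) :
  l < t < r -> (forall u, l < u < r -> f u = g u) -> is_derive f t d -> is_derive g t d.
Proof.
  intros Ht Hfg; apply is_derive_ext_loc.
  apply (filter_imp (fun u => l < u < r)); [exact Hfg | now apply locally_open_interval].
Qed.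

Lemma jacobi_angle_variation (delta l r c0 c1 : R) (k y y1 : R -> R -> R) (a a1 b b1 : R -> R) :
  0 < delta -> l < 0 < r ->
  smooth_on (fun s u => -delta < s < delta /\ l < u < r) k ->
  (forall s, -delta < s < delta -> forall u, l < u < r ->
     is_derive (y s) u (y1 s u) /\ is_derive (y1 s) u (- k s u * y s u)) ->
  (forall s, -delta < s < delta -> y s 0 = c0 /\ y1 s 0 = c1) ->
  (forall u, l < u < r ->
     is_derive a u (a1 u) /\ is_derive a1 u (- k 0 u * a u) /\
     is_derive b u (b1 u) /\ is_derive b1 u (- k 0 u * b u)) ->
  a 0 = 1 -> a1 0 = 0 -> b 0 = 0 -> b1 0 = 1 ->
  exists z z1 : R -> R,
    (forall u, l < u < r ->
       is_derive (fun s => y s u) 0 (z u) /\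
       is_derive z u (z1 u) /\ is_derive z1 u (- k 0 u * z u - dS k 0 u * y 0 u)) /\
    z 0 = 0 /\ z1 0 = 0.
Proof.
  intros Hdelta Hlr Hk Hy Hy0 Hab Ha0 Ha10 Hb0 Hb10.
  assert (Hdom : forall u, l < u < r -> -delta < 0 < delta /\ l < u < r) by (split; lra).
  destruct (jacobi_forced_solution l r (k 0) a a1 b b1 Hlr Hab Ha0 Ha10 Hb0 Hb10
              (fun v => dS k 0 v * y 0 v)) as [z [z1 [Hz [Hz0 Hz10]]]].
  { intros u Hu; apply (continuous_mult (dS k 0) (y 0)).
    - exact (smooth_on_continuous_t _ k Hk (true :: nil) 0 u (Hdom u Hu)).
    - apply (ex_derive_continuous (V := R_NormedModule)); exists (y1 0 u).
      apply Hy; [lra | exact Hu]. }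
  exists z, z1; split; [|easy].
  intros u Hu; split; [|now apply Hz].
  exact (jacobi_variation_is_derive delta l r u c0 c1 k y y1 z z1 Hdelta Hlr Hu Hk Hy Hy0 Hz Hz0 Hz10).
Qed.

Theorem lemma2p1
  (delta l r : R) (k a a1 b b1 : R -> R -> R) :
  0 < delta -> l < 0 < r ->
  smooth_on (fun s t => -delta < s < delta /\ l < t < r) k ->
  (forall s, -delta < s < delta ->
     (forall t, l < t < r ->
        is_derive (a s) t (a1 s t) /\
        is_derive (a1 s) t (- k s t * a s t) /\
        is_derive (b s) t (b1 s t) /\
        is_derive (b1 s) t (- k s t * b s t)) /\
     a s 0 = 1 /\ a1 s 0 = 0 /\ b s 0 = 0 /\ b1 s 0 = 1) ->
  let phi := fun t => b 0 t * dS a 0 t - a 0 t * dS b 0 t in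
  exists phi1 phi2 phi3 : R -> R,
    (forall t, l < t < r ->
       is_derive phi t (phi1 t) /\
       is_derive phi1 t (phi2 t) /\
       is_derive phi2 t (phi3 t) /\
       phi3 t + 4 * k 0 t * phi1 t + 2 * dT k 0 t * phi t
         = - 2 * dS k 0 t) /\
    phi 0 = 0 /\ phi1 0 = 0 /\ phi2 0 = 0.
Proof.
  intros Hdelta Hlr Hk Hsol phi.
  destruct (Hsol 0 ltac:(lra)) as [Hab0 [Ha0 [Ha10 [Hb0 Hb10]]]].
  assert (Ha : forall s, -delta < s < delta -> forall u, l < u < r ->
            is_derive (a s) u (a1 s u) /\ is_derive (a1 s) u (- k s u * a s u))
    by (intros s Hs u Hu; destruct (Hsol s Hs) as [Hs' _]; split; apply Hs', Hu).
  assert (Hb : forall s, -delta < s < delta -> forall u, l < u < r ->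
            is_derive (b s) u (b1 s u) /\ is_derive (b1 s) u (- k s u * b s u))
    by (intros s Hs u Hu; destruct (Hsol s Hs) as [Hs' _]; split; apply Hs', Hu).
  destruct (jacobi_angle_variation delta l r 1 0 k a a1 (a 0) (a1 0) (b 0) (b1 0))
    as [al [al1 [Hal [Hal0 Hal10]]]]; try easy; [intros s Hs; destruct (Hsol s Hs) as (_ & ? & ? & ? & ?); easy|].
  destruct (jacobi_angle_variation delta l r 0 1 k b b1 (a 0) (a1 0) (b 0) (b1 0))
    as [be [be1 [Hbe [Hbe0 Hbe10]]]]; try easy; [intros s Hs; destruct (Hsol s Hs) as (_ & ? & ? & ? & ?); easy|].
  destruct (variation_combination_ode l r (k 0) (a 0) (a1 0) (b 0) (b1 0) Hlr Hab0 Ha0 Ha10 Hb0 Hb10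
              (dS k 0) (dT k 0) al al1 be be1) as [phi1 [phi2 [phi3 [Hpsi [Hpsi0 Hpsi'0]]]]];
    try assumption.
  { intros u Hu; apply (smooth_on_is_derive_t _ k Hk nil); split; lra. }
  { intros u Hu; destruct (Hal u Hu) as [_ ?], (Hbe u Hu) as [_ ?]; easy. }
  assert (Hphi : forall u, l < u < r -> b 0 u * al u - a 0 u * be u = phi u).
  { intros u Hu; unfold phi.
    replace (dS a 0 u) with (al u) by (symmetry; apply is_derive_unique, Hal, Hu).
    now replace (dS b 0 u) with (be u) by (symmetry; apply is_derive_unique, Hbe, Hu). }
  exists phi1, phi2, phi3; split; [|split; [rewrite <- Hphi; [exact Hpsi0 | lra] | exact Hpsi'0]].
  intros t Ht; destruct (Hpsi t Ht) as [D1 D2].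
  rewrite <- Hphi by exact Ht; split; [|exact D2].
  exact (is_derive_ext_interval _ phi l r t _ Ht Hphi D1).
Qed.
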